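(* There exist metric spaces $(X,p)$, $(Y,d)$ and a multi-valued function $F: X \Rightarrow Y$ such that there is no metric $d_F$ on the set $F[X] = \{F(x) : x\in X\}$ with the property that for every $x \in X$, the single-valued map $x' \mapsto F(x')$ from $(X,p)$ to $(F[X], d_F)$ is continuous at $x$ (in the usual sense) if and only if $F$ is continuous at $x$ as a multi-valued function.
   Context: A multi-valued function $F: X \Rightarrow Y$ assigns to each $x$ a nonempty set $F(x)\subseteq Y$. $F$ is continuous at $x$ (as a multi-valued function) if there is some $y \in F(x)$ such that for every $\varepsilon>0$ there is $\delta>0$ such that for every $x' \in B_p(x,\delta)$ there is $y' \in F(x')$ with $d(y,y')<\varepsilon$. *)

From Stdlib Require Import Reals.
Open Scope R_scope.

Definition is_metric {T : Type} (d : T -> T -> R) : Prop :=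
  (forall x y, 0 <= d x y) /\
  (forall x y, d x y = 0 <-> x = y) /\
  (forall x y, d x y = d y x) /\
  (forall x y z, d x z <= d x y + d y z).

Definition is_metric_on {T : Type} (S : T -> Prop) (d : T -> T -> R) : Prop :=
  (forall x y, S x -> S y -> 0 <= d x y) /\
  (forall x y, S x -> S y -> (d x y = 0 <-> x = y)) /\
  (forall x y, S x -> S y -> d x y = d y x) /\
  (forall x y z, S x -> S y -> S z -> d x z <= d x y + d y z).

Definition multi_valued {X Y : Type} (F : X -> Y -> Prop) : Prop :=
  forall x, exists y, F x y.

Definition mv_image {X Y : Type} (F : X -> Y -> Prop) : (Y -> Prop) -> Prop :=
  fun A => exists x, A = F x.

Definition cont_at {X Z : Type} (p : X -> X -> R) (dZ : Z -> Z -> R)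
  (f : X -> Z) (x : X) : Prop :=
  forall eps, 0 < eps -> exists delta, 0 < delta /\
    forall x', p x x' < delta -> dZ (f x) (f x') < eps.

Definition mv_cont_at {X Y : Type} (p : X -> X -> R) (d : Y -> Y -> R)
  (F : X -> Y -> Prop) (x : X) : Prop :=
  exists y, F x y /\
    forall eps, 0 < eps -> exists delta, 0 < delta /\
      forall x', p x x' < delta -> exists y', F x' y' /\ d y y' < eps.

(* Take X = Y = R and let F(0) = {0}, F(x) = {0, 1} for x <> 0.  F is continuous
   at 0 as a multi-valued function (the value 0 is available everywhere), but the
   set-valued map x |-> F(x) takes the constant value F(1) <> F(0) on a punctured
   neighbourhood of 0, so it is discontinuous at 0 for every metric on F[X]. *)
From Stdlib Require Import Reals Lra FunctionalExtensionality PropExtensionality.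
Open Scope R_scope.

Lemma R_dist_is_metric : is_metric R_dist.
Proof.
  split; [|split; [|split]].
  - intros; apply Rge_le, R_dist_pos.
  - intros; apply R_dist_refl.
  - intros; apply R_dist_sym.
  - intros; apply R_dist_tri.
Qed.

Lemma metric_on_dist_pos {T : Type} (S : T -> Prop) (d : T -> T -> R) (a b : T) :
  is_metric_on S d -> S a -> S b -> a <> b -> 0 < d a b.
Proof.
  intros [d_ge0 [d_eq0 _]] Sa Sb a_neq_b.
  destruct (Rle_lt_or_eq_dec 0 (d a b) (d_ge0 a b Sa Sb)) as [pos|zero]; [exact pos|].
  exfalso; apply a_neq_b, (d_eq0 a b Sa Sb); auto.
Qed.

Lemma not_cont_at_punctured_const {Z : Type} (S : Z -> Prop) (dZ : Z -> Z -> R)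
    (f : R -> Z) (x0 : R) (a : Z) :
  is_metric_on S dZ -> S (f x0) -> S a -> f x0 <> a ->
  (forall x, x <> x0 -> f x = a) -> ~ cont_at R_dist dZ f x0.
Proof.
  intros metric_dZ S_fx0 Sa fx0_neq_a f_const cont.
  destruct (cont _ (metric_on_dist_pos S dZ _ _ metric_dZ S_fx0 Sa fx0_neq_a))
    as [delta [delta_pos close]].
  assert (near : R_dist x0 (x0 + delta / 2) < delta).
  { unfold R_dist; rewrite Rabs_left by lra; lra. }
  specialize (close _ near); rewrite (f_const (x0 + delta / 2)) in close by lra; lra.
Qed.

Definition jump_mv (x y : R) : Prop := y = 0 \/ (x <> 0 /\ y = 1).

Lemma jump_mv_nonzero (x : R) : x <> 0 -> jump_mv x = jump_mv 1.
Proof.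
  intro x_neq0; apply functional_extensionality; intro y;
    apply propositional_extensionality; unfold jump_mv.
  split; intros [y0 | [_ y1]]; auto; right; split; auto; lra.
Qed.

Lemma jump_mv_0_neq_1 : jump_mv 0 <> jump_mv 1.
Proof.
  intro E; assert (one_in : jump_mv 1 1) by (right; split; lra).
  rewrite <- E in one_in; destruct one_in as [H | [H _]]; lra.
Qed.

Lemma jump_mv_multi_valued : multi_valued jump_mv.
Proof. intro x; exists 0; left; reflexivity. Qed.

Lemma jump_mv_cont_at_0 : mv_cont_at R_dist R_dist jump_mv 0.
Proof.
  exists 0; split; [left; reflexivity|].
  intros eps eps_pos; exists 1; split; [lra|].
  intros x' _; exists 0; split; [left; reflexivity|].
  rewrite (proj2 (R_dist_refl 0 0) eq_refl); exact eps_pos.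
Qed.

Lemma jump_mv_image_not_cont_at_0 (dF : (R -> Prop) -> (R -> Prop) -> R) :
  is_metric_on (mv_image jump_mv) dF -> ~ cont_at R_dist dF jump_mv 0.
Proof.
  intro metric_dF.
  apply (not_cont_at_punctured_const _ _ _ _ (jump_mv 1) metric_dF).
  - exists 0; reflexivity.
  - exists 1; reflexivity.
  - exact jump_mv_0_neq_1.
  - exact jump_mv_nonzero.
Qed.

Theorem corollary2p7 :
  exists (X Y : Type) (p : X -> X -> R) (d : Y -> Y -> R) (F : X -> Y -> Prop),
    is_metric p /\ is_metric d /\ multi_valued F /\
    ~ exists dF : (Y -> Prop) -> (Y -> Prop) -> R,
        is_metric_on (mv_image F) dF /\
        forall x : X, cont_at p dF F x <-> mv_cont_at p d F x.
Proof.
  exists R, R, R_dist, R_dist, jump_mv.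
  split; [exact R_dist_is_metric|].
  split; [exact R_dist_is_metric|].
  split; [exact jump_mv_multi_valued|].
  intros [dF [metric_dF cont_iff]].
  apply (jump_mv_image_not_cont_at_0 dF metric_dF).
  apply cont_iff, jump_mv_cont_at_0.
Qed.
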